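(* Let $G$ be a graph that does not contain $K_{2,3}$ as a minor. Then $G$ contains $K^4$ as a minor if and only if $G$ contains $K^4$ as a subgraph.
   Context: Graphs are simple. *)

From mathcomp Require Import all_boot.
Set Implicit Arguments. Unset Strict Implicit. Unset Printing Implicit Defensive.

Definition simple_graph (T : finType) (e : rel T) : Prop :=
  symmetric e /\ irreflexive e.

Definition connected_in (T : finType) (e : rel T) (B : {set T}) : Prop :=
  forall x y, x \in B -> y \in B ->
    connect [rel u v | [&& e u v, u \in B & v \in B]] x y.

Definition minor_of (H : finType) (f : rel H) (T : finType) (e : rel T) : Prop :=
  exists B : H -> {set T},
    [/\ forall h, B h != set0,
        forall h, connected_in e (B h),
        forall h1 h2, h1 != h2 -> [disjoint B h1 & B h2]
      & forall h1 h2, f h1 h2 -> exists x y, [/\ x \in B h1, y \in B h2 & e x y]].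

Definition subgraph_of (H : finType) (f : rel H) (T : finType) (e : rel T) : Prop :=
  exists phi : H -> T, injective phi /\ forall h1 h2, f h1 h2 -> e (phi h1) (phi h2).

Definition K4_rel : rel 'I_4 := fun i j => i != j.

Definition K23_rel : rel ('I_2 + 'I_3)%type := fun u v =>
  match u, v with
  | inl _, inr _ => true
  | inr _, inl _ => true
  | _, _ => false
  end.

From mathcomp Require Import all_boot.
Set Implicit Arguments. Unset Strict Implicit. Unset Printing Implicit Defensive.

(* Take a K4 model whose branch sets have the fewest vertices in total.  If some
   branch set B a has two vertices or more, split it as {w} and Q = B a \ w with
   w a non-cut vertex.  By minimality neither {w} nor Q touches all three other
   branch sets, so {w} sees some B h1 that Q misses and Q sees some B h2 that w
   misses.  Whichever of {w}, Q touches the fourth branch set B h3, the five sets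
   {w}, Q, B h1, B h2, B h3 form a K_{2,3} model.  Hence without a K_{2,3} minor
   the minimal K4 model consists of singletons, i.e. it is a K4 subgraph. *)

Lemma connect_exit (T : finType) (r : rel T) (A : {set T}) x y :
  connect r x y -> x \in A -> y \notin A ->
  exists u v, [/\ u \in A, v \notin A & r u v].
Proof.
move/connectP=> [p rp ->{y}]; elim: p x rp => [|z p IHp] x /= rp xA; first by rewrite xA.
case/andP: rp => rxz rp; case zA: (z \in A); first exact: IHp.
by move=> _; exists x, z; rewrite zA.
Qed.

Lemma exists_notin (T : finType) (s : seq T) : size s < #|T| -> exists x, x \notin s.
Proof.
move=> lt_s_T; have /card_gt0P[x]: 0 < #|[predC s]|.
  by rewrite -(ltn_add2l #|s|) cardC addn0 (leq_ltn_trans (card_size s)).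
by exists x.
Qed.

Section Connectivity.

Variables (T : finType) (e : rel T).

Definition induced (B : {set T}) : rel T := [rel u v | [&& e u v, u \in B & v \in B]].

Definition adjacent_sets (S U : {set T}) := [exists x in S, exists y in U, e x y].

Lemma adjacent_setsP (S U : {set T}) :
  reflect (exists x y, [/\ x \in S, y \in U & e x y]) (adjacent_sets S U).
Proof.
apply: (iffP exists_inP) => [[x xS /exists_inP[y yU exy]]|[x [y [xS yU exy]]]].
  by exists x, y.
by exists x => //; apply/exists_inP; exists y.
Qed.

Lemma adjacent_setsUl S1 S2 U :
  adjacent_sets (S1 :|: S2) U = adjacent_sets S1 U || adjacent_sets S2 U.
Proof.
apply/adjacent_setsP/orP => [[x [y [/setUP[xS|xS] yU exy]]]|].
- by left; apply/adjacent_setsP; exists x, y.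
- by right; apply/adjacent_setsP; exists x, y.
by case=> /adjacent_setsP[x [y [xS yU exy]]]; exists x, y; rewrite inE xS ?orbT.
Qed.

Lemma connected_in1 x : connected_in e [set x].
Proof. by move=> u v /set1P-> /set1P->; apply: connect0. Qed.

Lemma connected_inP B :
  reflect (connected_in e B) [forall x in B, forall y in B, connect (induced B) x y].
Proof.
apply: (iffP forall_inP) => [cB x y xB yB|cB x xB].
  by have /forall_inP := cB x xB; apply.
by apply/forall_inP => y; apply: cB.
Qed.

Hypothesis e_sym : symmetric e.

Lemma adjacent_setsC (S U : {set T}) : adjacent_sets S U = adjacent_sets U S.
Proof.
by apply/adjacent_setsP/adjacent_setsP => -[x [y [xS yU exy]]]; exists y, x; rewrite e_sym.
Qed.

Lemma connected_inU1 Q u w :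
  connected_in e Q -> u \in Q -> e u w -> connected_in e (w |: Q).
Proof.
move=> cQ uQ euw.
have cQw x y : x \in Q -> y \in Q -> connect (induced (w |: Q)) x y.
  move=> xQ yQ; apply: connect_sub (cQ x y xQ yQ) => s t /and3P[est sQ tQ].
  by apply: connect1; rewrite /induced /= est !inE sQ tQ !orbT.
have uw : induced (w |: Q) u w by rewrite /induced /= euw !inE uQ eqxx orbT.
have wu : induced (w |: Q) w u by rewrite /induced /= e_sym euw !inE uQ eqxx orbT.
move=> x y /setU1P[->|xQ] /setU1P[->|yQ].
- exact: connect0.
- exact: connect_trans (connect1 wu) (cQw u y uQ yQ).
- exact: connect_trans (cQw x u xQ uQ) (connect1 uw).
- exact: cQw.
Qed.

Lemma connected_in_non_cut_vertex B : connected_in e B -> 1 < #|B| ->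
  exists2 w, w \in B &
    [/\ B :\ w != set0, connected_in e (B :\ w) & adjacent_sets (B :\ w) [set w]].
Proof.
move=> cB B_gt1; have [x0 x0B] : exists x0, x0 \in B.
  by apply/card_gt0P; apply: ltnW.
pose P := [pred S : {set T} | [&& S \proper B, S != set0 &
                               [forall x in S, forall y in S, connect (induced S) x y]]].
have P_x0 : P [set x0].
  rewrite inE /= -card_gt0 properEcard sub1set x0B cards1 B_gt1 /=.
  exact/connected_inP/connected_in1.
(* A largest connected proper subset Q of B misses a single vertex, since an
   edge leaving Q inside B extends it. *)
case: (arg_maxnP (fun S : {set T} => #|S|) P_x0) => Q /and3P[QB Qn /connected_inP cQ] Qmax.
have [x xQ] := set0Pn _ Qn.
have [/subsetP sQB [y yB yQ]] := properP QB.
have [u [w [uQ wQ /and3P[euw _ wB]]]] := connect_exit (cB x y (sQB _ xQ) yB) xQ yQ.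
have QwB : w |: Q = B.
  apply/eqP; apply: contraT => QwB; have /Qmax : P (w |: Q).
    rewrite inE /= properEneq QwB subUset sub1set wB (proper_sub QB).
    rewrite -card_gt0 cardsU1 wQ /=.
    by apply/connected_inP/(connected_inU1 cQ uQ euw).
  by rewrite cardsU1 wQ /= ltnn.
exists w => //; rewrite -QwB setU1K //; split=> //.
by apply/adjacent_setsP; exists u, w; rewrite set11.
Qed.

End Connectivity.

Section BranchSets.

Variables (T I : finType) (e : rel T).

Definition branch_sets (B : I -> {set T}) :=
  [/\ forall i, B i != set0, forall i, connected_in e (B i)
    & forall i j, i != j -> [disjoint B i & B j]].

Lemma branch_sets_update B a (S : {set T}) :
  branch_sets B -> S \subset B a -> S != set0 -> connected_in e S ->
  branch_sets [eta B with a |-> S].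
Proof.
move=> [B_n0 cB dB] sSB Sn0 cS; split=> [i|i|i j ij] /=; try by case: ifP.
case: (eqVneq i a) => [ia|ia]; case: (eqVneq j a) => [ja|ja].
- by rewrite ia ja eqxx in ij.
- by apply: disjointWl sSB _; apply: dB; rewrite -ia.
- by rewrite disjoint_sym; apply: disjointWl sSB _; apply: dB; rewrite -ja eq_sym.
- exact: dB.
Qed.

Lemma sum_card_update (B : I -> {set T}) a (S : {set T}) :
  #|S| < #|B a| -> \sum_i #|[eta B with a |-> S] i| < \sum_i #|B i|.
Proof.
move=> ltSB; rewrite (bigD1 a) //= [ltnRHS](bigD1 a) //= eqxx.
rewrite (eq_bigr (fun i => #|B i|)) => [|i /negbTE-> //].
by rewrite ltn_add2r.
Qed.

End BranchSets.

Lemma branch_sets_extend (T I : finType) (e : rel T) (B : I -> {set T}) x :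
  branch_sets e B -> (forall i, x \notin B i) ->
  branch_sets e (fun o : option I => oapp B [set x] o).
Proof.
move=> [B_n0 cB dB] xB; split=> [[i|]|[i|]|[i|] [j|] //= ij].
- exact: B_n0.
- by rewrite -card_gt0 cards1.
- exact: cB.
- exact: connected_in1.
- by apply: dB; apply: contraNneq ij => ->.
- by rewrite disjoint_sym disjoints1.
- by rewrite disjoints1.
Qed.

Section Minors.

Variables (H T : finType) (f : rel H) (e : rel T).

Definition minor_model (B : H -> {set T}) :=
  branch_sets e B /\ forall h1 h2, f h1 h2 -> adjacent_sets e (B h1) (B h2).

Lemma minor_ofP : minor_of f e <-> exists B, minor_model B.
Proof.
split=> [[B [B_n0 cB dB adjB]]|[B [[B_n0 cB dB] adjB]]]; exists B.
  by split=> // h1 h2 /adjB /adjacent_setsP.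
by split=> // h1 h2 /adjB /adjacent_setsP.
Qed.

Lemma minor_of_family (I : finType) (C : I -> {set T}) (g : H -> I) :
  branch_sets e C -> injective g ->
  (forall h1 h2, f h1 h2 -> adjacent_sets e (C (g h1)) (C (g h2))) ->
  minor_of f e.
Proof.
move=> [C_n0 cC dC] g_inj adjC; apply/minor_ofP; exists (C \o g).
split=> //; split=> [h|h|h1 h2 h12] /=; [exact: C_n0 | exact: cC |].
by apply: dC; rewrite (inj_eq g_inj).
Qed.

Lemma minor_of_subgraph : subgraph_of f e -> minor_of f e.
Proof.
move=> [phi [phi_inj phi_e]]; apply: (minor_of_family (C := @set1 T) _ phi_inj).
- split=> [x|x|x y xy]; first by rewrite -card_gt0 cards1.
    exact: connected_in1.
  by rewrite disjoints1 inE.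
- move=> h1 h2 /phi_e e12; apply/adjacent_setsP.
  by exists (phi h1), (phi h2); rewrite !set11.
Qed.

Lemma subgraph_of_small_model B :
  minor_model B -> (forall h, #|B h| <= 1) -> subgraph_of f e.
Proof.
move=> [[B_n0 _ dB] adjB] B_le1.
have B1 h : exists x, B h == [set x].
  have /cards1P[x ->] : #|B h| == 1 by rewrite eqn_leq B_le1 card_gt0 B_n0.
  by exists x.
pose phi h := xchoose (B1 h).
have Bphi h : B h = [set phi h] by apply/eqP/(xchooseP (B1 h)).
exists phi; split=> [h1 h2 phi12|h1 h2 /adjB].
  apply/eqP; apply: contraT => /dB; rewrite !Bphi disjoints1 phi12.
  by rewrite set11.
by rewrite !Bphi => /adjacent_setsP[x [y [/set1P-> /set1P->]]].
Qed.

Hypotheses (f_simple : simple_graph f) (e_sym : symmetric e).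

Lemma minor_model_shrink B a (S : {set T}) :
  minor_model B -> S \proper B a -> S != set0 -> connected_in e S ->
  (forall h, f a h -> adjacent_sets e S (B h)) ->
  exists2 B', minor_model B' & \sum_h #|B' h| < \sum_h #|B h|.
Proof.
move=> [bB adjB] SB Sn0 cS adjS; have [f_sym f_irr] := f_simple.
exists [eta B with a |-> S]; last exact: sum_card_update (proper_card SB).
split; first exact: branch_sets_update (proper_sub SB) Sn0 cS.
move=> h1 h2 /=; case: (eqVneq h1 a) => [->|h1a]; case: (eqVneq h2 a) => [->|h2a].
- by rewrite f_irr.
- exact: adjS.
- by rewrite adjacent_setsC // f_sym; apply: adjS.
- exact: adjB.
Qed.

End Minors.

Lemma K23_minor_of_family (T I : finType) (e : rel T) (C : I -> {set T})
    (P : 2.-tuple I) (Q : 3.-tuple I) :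
  symmetric e -> branch_sets e C -> uniq (P ++ Q) ->
  {in P & Q, forall p q, adjacent_sets e (C p) (C q)} ->
  minor_of K23_rel e.
Proof.
move=> e_sym bC; rewrite cat_uniq => /and3P[/tuple_uniqP P_inj PQ /tuple_uniqP Q_inj] adjPQ.
have tnthPQ i j : tnth P i != tnth Q j.
  apply: contraNneq PQ => PQij; apply/hasP; exists (tnth Q j); first exact: mem_tnth.
  by rewrite -PQij mem_tnth.
pose g u := match u with inl i => tnth P i | inr j => tnth Q j end.
apply: (minor_of_family (g := g) bC).
  case=> [i|j] [i'|j'] /= E.
  - by rewrite (P_inj _ _ E).
  - by have := tnthPQ i j'; rewrite E eqxx.
  - by have := tnthPQ i' j; rewrite E eqxx.
  - by rewrite (Q_inj _ _ E).
case=> [i|j] [i'|j'] //= _; last rewrite adjacent_setsC //.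
  all: exact: adjPQ (mem_tnth _ _) (mem_tnth _ _).
Qed.

Lemma K4_rel_simple : simple_graph K4_rel.
Proof. by split=> [i j|i]; rewrite /K4_rel ?eqxx // eq_sym. Qed.

Section K4.

Variables (T : finType) (e : rel T).
Hypothesis e_sym : symmetric e.

Lemma K4_model_adjacent_split B a w h :
  minor_model K4_rel e B -> w \in B a -> h != a ->
  adjacent_sets e [set w] (B h) || adjacent_sets e (B a :\ w) (B h).
Proof.
move=> [_ adjB] wB ha; rewrite -adjacent_setsUl setD1K //.
by apply: adjB; rewrite /K4_rel eq_sym.
Qed.

Lemma K4_model_split_K23 B a w h1 h2 :
  minor_model K4_rel e B -> w \in B a ->
  B a :\ w != set0 -> connected_in e (B a :\ w) -> adjacent_sets e (B a :\ w) [set w] ->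
  h1 != a -> h2 != a -> h1 != h2 ->
  adjacent_sets e [set w] (B h1) -> adjacent_sets e (B a :\ w) (B h2) ->
  minor_of K23_rel e.
Proof.
move=> mB wB Qn0 cQ adjQw h1a h2a h12 adjw1 adjQ2.
have [bB adjB] := mB; have [_ _ dB] := bB.
set Q := B a :\ w in Qn0 cQ adjQw adjQ2.
pose C o := oapp [eta B with a |-> Q] [set w] o.
have bC : branch_sets e C.
  apply: branch_sets_extend; first exact: branch_sets_update bB (subsetDl _ _) Qn0 cQ.
  move=> i /=; case: (eqVneq i a) => [_|ia]; first by rewrite setD11.
  by rewrite (disjointFr (dB a i _) wB) // eq_sym.
have CSa : C (Some a) = Q by rewrite /= eqxx.
have CS h : h != a -> C (Some h) = B h by move/negbTE=> /= ->.
have [h3] : exists h3, h3 \notin [:: a; h1; h2] by apply: exists_notin; rewrite card_ord.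
rewrite !inE !negb_or => /and3P[h3a h31 h32].
have ne (x y : 'I_4) : x != y -> ((x == y) = false) * ((y == x) = false).
  by move=> xy; rewrite [y == x]eq_sym (negbTE xy).
have neqs := (ne _ _ h1a, ne _ _ h2a, ne _ _ h3a, ne _ _ h12, ne _ _ h31, ne _ _ h32).
case/orP: (K4_model_adjacent_split mB wB h3a) => [adjw3|adjQ3].
- apply: (K23_minor_of_family (P := [tuple None; Some h2])
                              (Q := [tuple Some h1; Some h3; Some a]) e_sym bC).
    by rewrite /= !inE !(inj_eq (@Some_inj _)) !neqs.
  move=> p q; rewrite !inE => /orP[]/eqP-> /or3P[]/eqP->; rewrite ?CSa ?CS //;
  first [by rewrite adjacent_setsC | by apply: adjB; rewrite /K4_rel // eq_sym].
- apply: (K23_minor_of_family (P := [tuple Some h1; Some a])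
                              (Q := [tuple Some h2; Some h3; None]) e_sym bC).
    by rewrite /= !inE !(inj_eq (@Some_inj _)) !neqs.
  move=> p q; rewrite !inE => /orP[]/eqP-> /or3P[]/eqP->; rewrite ?CSa ?CS //;
  first [by rewrite adjacent_setsC | by apply: adjB; rewrite /K4_rel // eq_sym].
Qed.

Lemma K4_model_reduce B a :
  minor_model K4_rel e B -> 1 < #|B a| ->
  minor_of K23_rel e \/
  exists2 B', minor_model K4_rel e B' & \sum_h #|B' h| < \sum_h #|B h|.
Proof.
move=> mB Ba_gt1; have [[_ cB _] _] := mB.
have [w wB [Qn0 cQ adjQw]] := connected_in_non_cut_vertex e_sym (cB a) Ba_gt1.
have shrink (S : {set T}) : S \proper B a -> S != set0 -> connected_in e S ->
    (forall h, h != a -> adjacent_sets e S (B h)) ->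
    exists2 B', minor_model K4_rel e B' & \sum_h #|B' h| < \sum_h #|B h|.
  move=> SB Sn0 cS adjS.
  apply: (minor_model_shrink K4_rel_simple e_sym mB SB Sn0 cS) => h.
  by rewrite /K4_rel eq_sym; apply: adjS.
case: (boolP [forall (h | h != a), adjacent_sets e (B a :\ w) (B h)]).
  by move/forall_inP=> adjQ; right; apply: shrink (properD1 wB) Qn0 cQ adjQ.
rewrite negb_forall_in => /exists_inP[h1 h1a not_adjQ1].
case: (boolP [forall (h | h != a), adjacent_sets e [set w] (B h)]).
  move/forall_inP=> adjw; right.
  apply: (shrink [set w] _ _ (connected_in1 e (x := w)) adjw).
    by rewrite properEcard sub1set wB cards1.
  by rewrite -card_gt0 cards1.
rewrite negb_forall_in => /exists_inP[h2 h2a not_adjw2].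
have := K4_model_adjacent_split mB wB h1a; rewrite (negbTE not_adjQ1) orbF => adjw1.
have := K4_model_adjacent_split mB wB h2a; rewrite (negbTE not_adjw2) => adjQ2.
have h12 : h1 != h2 by apply: contraNneq not_adjw2 => <-.
by left; apply: K4_model_split_K23 mB wB Qn0 cQ adjQw h1a h2a h12 adjw1 adjQ2.
Qed.

Lemma K4_minor_model_subgraph_or_K23 B :
  minor_model K4_rel e B -> subgraph_of K4_rel e \/ minor_of K23_rel e.
Proof.
have [n] := ubnP (\sum_h #|B h|); elim: n B => // n IHn B lt_B_n mB.
have [B_le1|] := boolP [forall h, #|B h| <= 1].
  by left; apply: subgraph_of_small_model mB (forallP B_le1).
rewrite negb_forall => /existsP[a]; rewrite -ltnNge => Ba_gt1.
have [|[B' mB' lt_B'_B]] := K4_model_reduce mB Ba_gt1; first by right.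
exact: IHn B' (leq_trans lt_B'_B lt_B_n) mB'.
Qed.

End K4.

Theorem lemma4p1 (T : finType) (e : rel T) :
  simple_graph e ->
  ~ minor_of K23_rel e ->
  (minor_of K4_rel e <-> subgraph_of K4_rel e).
Proof.
move=> [e_sym _] noK23; split; last exact: minor_of_subgraph.
by case/minor_ofP=> B /(K4_minor_model_subgraph_or_K23 e_sym) [|/noK23].
Qed.
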